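(* Let $A, M, F \in \mathbb{C}^{n\times n}$ with $M$ and $F$ nonsingular, and let $I$ be the $n\times n$ identity matrix. Suppose $A$ is an $\mathsf H$-matrix and \[ \langle M\rangle - |M - A| = \langle A\rangle, \qquad \langle F\rangle - |F - A| = \langle A\rangle. \] Then \[ \rho\left(\left| I - F^{-1}(M + F - A) M^{-1} A \right|\right) < 1. \]
   Context: For a matrix $\mathcal A$, $|\mathcal A|$ denotes the entrywise absolute value (modulus) and $\rho(\mathcal A)$ its spectral radius. Comparisons between matrices are entrywise. A square real matrix $\mathcal A$ is an $\mathsf M$-matrix if there exists $\alpha\in\mathbb R$ with $\alpha I - \mathcal A \ge 0$ (entrywise) and $\alpha > \rho(\alpha I - \mathcal A)$. The comparison matrix $\langle \mathcal A\rangle$ of a square matrix $\mathcal A$ is defined by $\langle \mathcal A\rangle_{i,i} := |\mathcal A_{i,i}|$ and $\langle \mathcal A\rangle_{i,j} := -|\mathcal A_{i,j}|$ for $i\ne j$. A square matrix $\mathcal A$ is an $\mathsf H$-matrix if its comparison matrix $\langle\mathcal A\rangle$ is an $\mathsf M$-matrix. *)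

From HB Require Import structures.
From mathcomp Require Import all_boot all_order all_algebra.
Set Implicit Arguments. Unset Strict Implicit. Unset Printing Implicit Defensive.
Import Order.TTheory GRing.Theory Num.Theory.
Local Open Scope ring_scope.

(* Complex numbers are modelled by an arbitrary numeric algebraically closed
   field C (e.g. algC, or complex R for a real closed R). *)

(* multiset of eigenvalues (roots of the characteristic polynomial, with
   multiplicity); the characteristic polynomial is monic, so it splits as
   \prod_(z <- eigvals A) ('X - z%:P). *)
Definition eigvals (C : numClosedFieldType) (n : nat) (A : 'M[C]_n) : seq C :=
  sval (closed_field_poly_normal (char_poly A)).

(* spectral radius: max modulus of eigenvalues (0 for the empty matrix) *)
Definition spectral_radius (C : numClosedFieldType) (n : nat) (A : 'M[C]_n) : C :=
  \big[Num.max/0]_(z <- eigvals A) `|z|.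

Definition mxabs (C : numClosedFieldType) (m n : nat) (A : 'M[C]_(m, n)) : 'M[C]_(m, n) :=
  \matrix_(i, j) `|A i j|.

Definition cmpmx (C : numClosedFieldType) (n : nat) (A : 'M[C]_n) : 'M[C]_n :=
  \matrix_(i, j) (if i == j then `|A i i| else - `|A i j|).

Definition is_Mmatrix (C : numClosedFieldType) (n : nat) (A : 'M[C]_n) : Prop :=
  (forall i j, A i j \is Num.real) /\
  exists alpha : C, alpha \is Num.real /\
    (forall i j, 0 <= (alpha%:M - A) i j) /\
    spectral_radius (alpha%:M - A) < alpha.

Definition is_Hmatrix (C : numClosedFieldType) (n : nat) (A : 'M[C]_n) : Prop :=
  is_Mmatrix (cmpmx A).

(* As A is an H-matrix, <A> = al I - B with B >= 0 and rho(B) < al, and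
   such a Z-matrix is semipositive: <A> u > 0 for some u > 0.  In the
   u-weighted max-norm, M^-1 (M - A) and F^-1 (F - A) are
   strict contractions, since the splitting condition says that <M> u exceeds
   |M - A| u by the positive vector <A> u.  The iteration matrix is the product
   of these two contractions, so |T| u < u entrywise, and this bounds every
   eigenvalue of the nonnegative matrix |T| by 1 in modulus.

   The vector u is built by induction on n from the Schur complement of the
   trailing principal submatrix B' of B.  That B' has no real eigenvalue
   >= al either is a continuity argument: h(t) = (t - b00) det(t - B') -
   det(t - B) is >= 0 beyond the largest real eigenvalue s of B', because
   (t - B')^-1 >= 0 there by induction, yet h(s) = - det(s - B) < 0. *)

From HB Require Import structures.
From mathcomp Require Import all_boot all_order all_algebra.
From mathcomp Require Import ring.
Set Implicit Arguments. Unset Strict Implicit. Unset Printing Implicit Defensive.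
Import Order.TTheory GRing.Theory Num.Theory.
Local Open Scope ring_scope.

Section RealArgmax.
Variable R : numDomainType.

Lemma real_argmax (I : finType) (i0 : I) (g : I -> R) :
  (forall i, g i \is Num.real) -> exists i, forall j, g j <= g i.
Proof.
move=> gR; have [|i _ gi] := @comparable_arg_maxP _ _ I i0 predT g isT.
  by move=> i j _ _; apply: real_comparable.
by exists i => j; apply: gi.
Qed.

Lemma seq_real_max (s : seq R) :
  s != [::] -> {in s, forall x, x \is Num.real} ->
  exists2 x, x \in s & forall y, y \in s -> y <= x.
Proof.
case: s => // x0 s _; set s0 := x0 :: s => sR.
have [i imax] := @real_argmax _ ord0 (fun i : 'I_(size s0) => nth 0 s0 i)
  (fun i => sR _ (@mem_nth _ 0 s0 i (ltn_ord i))).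
exists (nth 0 s0 i); first exact: mem_nth.
by move=> y ys; rewrite -(nth_index 0 ys); apply: (imax (Ordinal _)); rewrite index_mem.
Qed.

End RealArgmax.

Lemma weighted_argmax (R : numFieldType) n (x u : 'cV[R]_n) (i0 : 'I_n) :
  (forall i, 0 < u i 0) -> exists i, forall j, `|x j 0| <= `|x i 0| / u i 0 * u j 0.
Proof.
move=> u_gt0; have [i imax] : exists i, forall j, `|x j 0| / u j 0 <= `|x i 0| / u i 0.
  by apply: (real_argmax i0) => j; rewrite rpredM ?rpredV ?normr_real ?gtr0_real.
by exists i => j; rewrite -ler_pdivrMr.
Qed.

Lemma det_mxOver (R : comPzRingType) (S : subringClosed R) n (A : 'M[R]_n) :
  A \is a mxOver S -> \det A \in S.
Proof.
move=> /mxOverP AS; rewrite rpred_sum // => s _.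
by rewrite rpredM ?rpredX ?rpredN ?rpred1 // rpred_prod.
Qed.

Lemma invmx_mxOver (R : comUnitRingType) (S : divringClosed R) n (A : 'M[R]_n) :
  A \is a mxOver S -> invmx A \is a mxOver S.
Proof.
move=> AS; rewrite /invmx; case: ifP => // _; apply/mxOverP => i j.
rewrite !mxE rpredM ?rpredV ?det_mxOver // rpredM ?rpredX ?rpredN ?rpred1 //.
by rewrite det_mxOver //; apply/mxOverP => k l; rewrite !mxE (mxOverP AS).
Qed.

Section Semipositive.
Variable R : numFieldType.

Definition is_Zmatrix n (Q : 'M[R]_n) := forall i j, i != j -> Q i j <= 0.

Definition semipositive n (Q : 'M[R]_n) :=
  exists2 u : 'cV[R]_n, (forall i, 0 < u i 0) & (forall i, 0 < (Q *m u) i 0).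

Lemma Zmatrix_semipositive_ge0 n (Q : 'M[R]_n) (x : 'cV[R]_n) :
  is_Zmatrix Q -> semipositive Q -> x \is a mxOver Num.real ->
  (forall i, 0 <= (Q *m x) i 0) -> forall i, 0 <= x i 0.
Proof.
move=> QZ [u u_gt0 Qu_gt0] xR Qx_ge0 i0.
have uR j : u j 0 \is Num.real := gtr0_real (u_gt0 j).
have [i imin] : exists i, forall j, - (x j 0 / u j 0) <= - (x i 0 / u i 0).
  by apply: (real_argmax i0) => j; rewrite rpredN rpredM ?rpredV ?(mxOverP xR).
set mu := x i 0 / u i 0 in imin.
have x_ge j : mu * u j 0 <= x j 0 by have := imin j; rewrite lerN2 ler_pdivlMr.
have : (Q *m x) i 0 <= mu * (Q *m u) i 0.
  rewrite -subr_le0 !mxE mulr_sumr -sumrB; apply: sumr_le0 => j _.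
  rewrite mulrCA -mulrBr.
  have [<-|ij] := eqVneq i j; first by rewrite /mu divfK ?subrr ?mulr0 ?gt_eqF.
  by rewrite mulr_le0_ge0 ?QZ // subr_ge0.
move=> /(le_trans (Qx_ge0 i)); rewrite pmulr_lge0 // => mu_ge0.
by apply: le_trans (x_ge i0); rewrite mulr_ge0 // ltW.
Qed.

Lemma semipositive_block m (a : R) (r : 'rV[R]_m) (c : 'cV[R]_m) (X : 'M[R]_m) :
  (forall j, 0 <= r 0 j) -> semipositive X -> X \in unitmx ->
  (forall i, 0 <= (invmx X *m c) i 0) -> (r *m invmx X *m c) 0 0 < a ->
  semipositive (block_mx a%:M (- r) (- c) X).
Proof.
move=> r_ge0 [u u_gt0 Xu_gt0] Xunit Xc_ge0 ra_lt.
set sigma := a - (r *m invmx X *m c) 0 0.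
have sigma_gt0 : 0 < sigma by rewrite subr_gt0.
set k := (r *m u) 0 0.
have k_ge0 : 0 <= k by rewrite /k mxE sumr_ge0 // => j _; rewrite mulr_ge0 // ltW.
set eps := sigma / (k + 1).
have eps_gt0 : 0 < eps by rewrite divr_gt0 // ltr_wpDl.
exists (col_mx 1%:M (invmx X *m c + eps *: u)) => i;
  case: (split_ordP i) => j ->; rewrite ?col_mxEu ?col_mxEd ?mul_block_col.
- by rewrite ord1 mxE.
- by rewrite mxE [(eps *: u) _ _]mxE ltr_wpDl ?Xc_ge0 // mulr_gt0.
- rewrite col_mxEu ord1 mulmx1 mulNmx mulmxDr -scalemxAr mulmxA.
  have -> : (a%:M - (r *m invmx X *m c + eps *: (r *m u))) 0 0 = sigma - eps * k.
    by rewrite /sigma /k !mxE eqxx mulr1n opprD addrA.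
  suff -> : sigma - eps * k = eps by [].
  by rewrite /eps; field; rewrite gt_eqF // ltr_wpDl.
- rewrite col_mxEd mulmx1 mulmxDr mulKVmx // -scalemxAr addKr mxE.
  by rewrite mulr_gt0.
Qed.

End Semipositive.

Lemma poly_lt0_right (R : numFieldType) (p : {poly R}) x :
  x \is Num.real -> p.[x] < 0 -> exists2 t, x < t & ~ 0 <= p.[t].
Proof.
move=> xR px_lt0.
have /factor_theorem[q pq] : root (p - p.[x]%:P) x by rewrite rootE !hornerE subrr.
have [K qK] := poly_disk_bound q (`|x| + 1).
set e := - p.[x]; have e_gt0 : 0 < e by rewrite oppr_gt0.
have K_ge0 : 0 <= K by apply: le_trans (normr_ge0 q.[x]) (qK x _); rewrite lerDl.
set d := e / (K + e + 1).
have Ke1_gt0 : 0 < K + e + 1 := addr_gt0 (ltr_wpDl K_ge0 e_gt0) ltr01.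
have d_gt0 : 0 < d by rewrite divr_gt0.
have d_le1 : d <= 1.
  by rewrite ler_pdivrMr // mul1r -addrA (addrC e) addrA lerDr addr_ge0.
have dK_lt : K * d < e.
  rewrite /d mulrA ltr_pdivrMr // mulrDr mulrDr mulr1 (mulrC e) -addrA ltrDl.
  by rewrite addr_gt0 // mulr_gt0.
exists (x + d) => [|pt_ge0]; first by rewrite ltrDl.
have pt : p.[x + d] + e = q.[x + d] * d.
  move: (congr1 (horner^~ (x + d)) pq).
  rewrite /= hornerD hornerN hornerC hornerM hornerXsubC => ->.
  by rewrite addrAC subrr add0r.
have e_le : e <= `|q.[x + d] * d| by rewrite -pt ger0_norm ?lerDr // addr_ge0 // ltW.
suff : `|q.[x + d] * d| < e by move=> /(le_lt_trans e_le); rewrite ltxx.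
apply: le_lt_trans dK_lt; rewrite normrM (gtr0_norm d_gt0) ler_wpM2r ?(ltW d_gt0) // qK //.
by rewrite (le_trans (ler_normD _ _)) // lerD2l gtr0_norm.
Qed.

Section Schur.
Variable R : comUnitRingType.

Lemma det_block_scalar m (a : R) (r : 'rV[R]_m) (c : 'cV[R]_m) (X : 'M[R]_m) :
  X \in unitmx ->
  \det (block_mx a%:M r c X) = (a - (r *m invmx X *m c) 0 0) * \det X.
Proof.
move=> Xunit.
have -> : block_mx a%:M r c X =
    block_mx 1%:M (r *m invmx X) 0 1%:M *m block_mx (a%:M - r *m invmx X *m c) 0 c X.
  by rewrite mulmx_block !mul1mx !mul0mx !add0r mulmxKV // subrK.
by rewrite det_mulmx det_ublock det_lblock !det1 !mul1r det_mx11 !mxE eqxx mulr1n.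
Qed.

Lemma scalar_sub_block m (t : R) (B : 'M[R]_(1 + m)) :
  t%:M - B = block_mx (t - B 0 0)%:M (- ursubmx B) (- dlsubmx B) (t%:M - drsubmx B).
Proof.
rewrite -{1}[B]submxK (scalar_mx_block 1 m t) opp_block_mx add_block_mx !sub0r.
congr block_mx; apply/matrixP => i j; rewrite !mxE !ord1 /= !mulr1n.
by congr (_ - B _ _); apply/val_inj.
Qed.

End Schur.

Lemma det_scalar_sub_schur (R : comUnitRingType) m (B : 'M[R]_(1 + m)) t :
  (t%:M - drsubmx B) \in unitmx ->
  \det (t%:M - B) = (t - B 0 0 - (ursubmx B *m invmx (t%:M - drsubmx B) *m dlsubmx B) 0 0)
                    * \det (t%:M - drsubmx B).
Proof.
by move=> Xunit; rewrite scalar_sub_block det_block_scalar // mulNmx mulmxN mulNmx opprK.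
Qed.

Lemma iteration_matrix_factor (R : comUnitRingType) n (A M F : 'M[R]_n) :
  M \in unitmx -> F \in unitmx ->
  1%:M - invmx F *m (M + F - A) *m invmx M *m A =
  (invmx F *m (F - A)) *m (invmx M *m (M - A)).
Proof.
move=> Munit Funit.
have -> : invmx F *m (M + F - A) *m invmx M *m A =
    invmx F *m A + invmx M *m A - invmx F *m A *m (invmx M *m A).
  by rewrite -!mulmxA !mulmxBl !mulmxDl mulKVmx // !mulmxBr !mulmxDr mulKmx.
rewrite !mulmxBr !mulVmx // !mulmxBl !mul1mx mulmx1 !opprD !opprK !addrA.
by rewrite addrAC.
Qed.

Section Spectrum.
Variable C : numClosedFieldType.

Lemma char_poly_eigvals n (B : 'M[C]_n) :
  char_poly B = \prod_(z <- eigvals B) ('X - z%:P).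
Proof.
rewrite /eigvals; case: closed_field_poly_normal => s /= ->.
by rewrite (monicP (char_poly_monic B)) scale1r.
Qed.

Lemma horner_char_poly n (B : 'M[C]_n) t : (char_poly B).[t] = \det (t%:M - B).
Proof.
rewrite -horner_evalE /char_poly -det_map_mx; congr (\det _).
apply/matrixP => i j; rewrite !mxE /= horner_evalE.
by rewrite hornerD hornerN hornerMn hornerX hornerC.
Qed.

Lemma det_scalar_sub_eigvals n (B : 'M[C]_n) t :
  \det (t%:M - B) = \prod_(z <- eigvals B) (t - z).
Proof.
rewrite -horner_char_poly char_poly_eigvals horner_prod.
by apply: eq_bigr => z _; rewrite hornerXsubC.
Qed.

Lemma eigvals_det_eq0 n (B : 'M[C]_n) z : z \in eigvals B -> \det (z%:M - B) = 0.
Proof.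
move=> zB; rewrite -horner_char_poly char_poly_eigvals; apply/eqP.
by rewrite -/(root _ z) root_prod_XsubC.
Qed.

Lemma eigvals_eigenvector n (B : 'M[C]_n) z :
  z \in eigvals B -> exists2 x : 'cV[C]_n, x != 0 & B *m x = z *: x.
Proof.
move/eigvals_det_eq0/eqP; rewrite -det_tr => /det0P[v v_neq0 vBz].
exists v^T; first by rewrite trmx_eq0.
move/(congr1 trmx): vBz; rewrite trmx_mul trmxK trmx0 mulmxBl mul_scalar_mx.
by move/eqP; rewrite subr_eq0 => /eqP.
Qed.

Lemma eigvals_conj n (B : 'M[C]_n) :
  B \is a mxOver Num.real -> perm_eq (eigvals B) (map Num.conj (eigvals B)).
Proof.
move=> /mxOverP BR; apply: prod_XsubC_eq; rewrite -char_poly_eigvals big_map.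
transitivity (map_poly Num.conj (char_poly B)).
  rewrite map_char_poly; congr char_poly; apply/matrixP => i j.
  by rewrite mxE; apply/esym/CrealP.
by rewrite char_poly_eigvals rmorph_prod; apply: eq_bigr => z _; rewrite /= map_polyXsubC.
Qed.

(* Non-real z pair off with z^*, and (t - z) (t - z^* ) = |t - z|^2 > 0. *)
Lemma prod_sub_conj_closed_gt0 (s : seq C) t :
  t \is Num.real -> perm_eq s (map Num.conj s) ->
  (forall z, z \in s -> z \is Num.real -> z < t) -> 0 < \prod_(z <- s) (t - z).
Proof.
move=> tR; have [k] := ubnP (size s); elim: k s => // k IH [|z s] /=.
  by rewrite big_nil.
rewrite ltnS big_cons => sk s_conj s_lt.
have [zR|zNR] := boolP (z \is Num.real).
  rewrite mulr_gt0 ?subr_gt0 ?s_lt ?mem_head // IH // => [|y ys].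
    by move: s_conj; rewrite /= (conj_Creal zR) perm_cons.
  by apply: s_lt; rewrite inE ys orbT.
have zc_s : z^* \in s.
  have : z^* \in z :: s by rewrite (perm_mem s_conj) mem_head.
  by rewrite inE (negbTE (contraNneq _ zNR)) //= => /eqP; rewrite CrealE => ->.
set s' := rem z^* s; have s_rem : perm_eq s (z^* :: s') := perm_to_rem zc_s.
rewrite (perm_big _ s_rem) big_cons mulrA mulr_gt0 //.
  rewrite -[t in t - z^*](conj_Creal tR) -rmorphB -normCK exprn_gt0 // normr_gt0.
  by rewrite subr_eq0; apply: contraNneq zNR => <-.
apply: IH => [|| y ys]; first by rewrite (perm_size s_rem) in sk; apply: ltnW.
  have zs_rem : perm_eq (z :: z^* :: s') (z :: s) by rewrite perm_cons perm_sym.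
  have conj_rem : perm_eq (map Num.conj (z :: s)) (z^* :: z :: map Num.conj s').
    by rewrite /= perm_cons; move: (perm_map Num.conj s_rem); rewrite /= conjCK.
  have swap : perm_eq (z^* :: z :: s') (z :: z^* :: s').
    by apply/permPl/(perm_catCA [:: z^*] [:: z]).
  have := perm_trans swap (perm_trans (perm_trans zs_rem s_conj) conj_rem).
  by rewrite !perm_cons.
by apply: s_lt; rewrite inE (mem_rem ys) orbT.
Qed.

Definition real_eigvals_lt n (B : 'M[C]_n) (a : C) :=
  forall z, z \in eigvals B -> z \is Num.real -> z < a.

Lemma det_scalar_sub_gt0 n (B : 'M[C]_n) t :
  B \is a mxOver Num.real -> t \is Num.real -> real_eigvals_lt B t ->
  0 < \det (t%:M - B).
Proof.
by move=> BR tR Bt; rewrite det_scalar_sub_eigvals prod_sub_conj_closed_gt0 ?eigvals_conj.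
Qed.

Lemma norm_eigval_le_spectral_radius n (B : 'M[C]_n) z :
  z \in eigvals B -> `|z| <= spectral_radius B.
Proof.
rewrite /spectral_radius; elim: (eigvals B) => // y s IH.
have rhoR : \big[Num.max/0]_(x <- s) `|x| \is Num.real.
  by apply: bigmax_real => // x _; apply: normr_real.
rewrite inE big_cons comparable_le_max ?real_comparable ?normr_real //.
by case/orP => [/eqP-> | /IH->]; rewrite ?lexx ?orbT.
Qed.

Lemma spectral_radius_lt n (B : 'M[C]_n) a :
  0 < a -> (forall z, z \in eigvals B -> `|z| < a) -> spectral_radius B < a.
Proof.
rewrite /spectral_radius => a_gt0; elim: (eigvals B) => [|y s IH] lt_a.
  by rewrite big_nil.
rewrite big_cons maxEle; case: ifP => _; last by apply: lt_a; rewrite mem_head.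
by apply: IH => z zs; apply: lt_a; rewrite inE zs orbT.
Qed.

Lemma spectral_radius_real_eigvals_lt n (B : 'M[C]_n) a :
  spectral_radius B < a -> real_eigvals_lt B a.
Proof.
move=> rho_lt z zB zR; rewrite (le_lt_trans (real_ler_norm zR)) //.
exact: le_lt_trans (norm_eigval_le_spectral_radius zB) rho_lt.
Qed.

Lemma norm_mulmx_le_mxabs m n (N : 'M[C]_(m, n)) (y v : 'cV[C]_n) i :
  (forall j, `|y j 0| <= v j 0) -> `|(N *m y) i 0| <= (mxabs N *m v) i 0.
Proof.
move=> y_le; rewrite !mxE (le_trans (ler_norm_sum _ _ _)) // ler_sum // => j _.
by rewrite mxE normrM ler_wpM2l.
Qed.

Lemma eigval_norm_lt1 n (G : 'M[C]_n) (u : 'cV[C]_n) z :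
  (forall i j, 0 <= G i j) -> (forall i, 0 < u i 0) -> (forall i, (G *m u) i 0 < u i 0) ->
  z \in eigvals G -> `|z| < 1.
Proof.
move=> G_ge0 u_gt0 Gu_lt /eigvals_eigenvector[x x_neq0 Gx].
have [k xk_neq0] : exists k, x k 0 != 0.
  apply/existsP; apply: contraNT x_neq0; rewrite negb_exists => /forallP x0.
  by apply/eqP/matrixP => j l; rewrite ord1 mxE; apply/eqP/negbNE/x0.
have [i imax] := weighted_argmax x k u_gt0.
set t := `|x i 0| / u i 0 in imax.
have t_gt0 : 0 < t.
  have xk_gt0 : 0 < `|x k 0| by rewrite normr_gt0.
  by have := lt_le_trans xk_gt0 (imax k); rewrite pmulr_lgt0.
have xi : `|x i 0| = t * u i 0 by rewrite /t divfK // gt_eqF.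
have xi_gt0 : 0 < `|x i 0| by rewrite xi mulr_gt0.
have absG : mxabs G = G by apply/matrixP => p q; rewrite mxE ger0_norm.
rewrite -(gtr_pMl _ xi_gt0) -normrM.
have -> : z * x i 0 = (G *m x) i 0 by rewrite Gx mxE.
apply: le_lt_trans (norm_mulmx_le_mxabs (v := t *: u) _ _ _) _ => [j|].
  by rewrite mxE.
by rewrite absG -scalemxAr mxE xi ltr_pM2l.
Qed.

Lemma cmpmx_mulmx_weighted n (M : 'M[C]_n) (x u : 'cV[C]_n) t i :
  (forall j, `|x j 0| <= t * u j 0) -> `|x i 0| = t * u i 0 ->
  t * (cmpmx M *m u) i 0 <= `|(M *m x) i 0|.
Proof.
move=> x_le xi; rewrite /cmpmx !mxE (bigD1 i) //= [X in _ <= `|X|](bigD1 i) //= mxE eqxx.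
apply: le_trans _ (lerB_normD _ _); rewrite mulrDr normrM xi mulrCA lerD2l.
rewrite mulr_sumr lerNr -sumrN (le_trans (ler_norm_sum _ _ _)) // ler_sum // => j ji.
by rewrite mxE eq_sym (negbTE ji) mulNr mulrN opprK mulrCA normrM ler_wpM2l.
Qed.

Lemma splitting_contraction n (A M : 'M[C]_n) (u y : 'cV[C]_n) :
  M \in unitmx -> cmpmx M - mxabs (M - A) = cmpmx A ->
  (forall i, 0 < u i 0) -> (forall i, 0 < (cmpmx A *m u) i 0) ->
  (forall j, `|y j 0| <= u j 0) -> forall p, `|(invmx M *m (M - A) *m y) p 0| < u p 0.
Proof.
move=> Munit splitting u_gt0 Au_gt0 y_le p.
set x := invmx M *m (M - A) *m y.
have [i imax] := weighted_argmax x p u_gt0.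
set t := `|x i 0| / u i 0 in imax.
have xi : `|x i 0| = t * u i 0 by rewrite /t divfK // gt_eqF.
set S := (mxabs (M - A) *m u) i 0.
have S_ge0 : 0 <= S := le_trans (normr_ge0 _) (norm_mulmx_le_mxabs (M - A) i y_le).
have SD_gt0 : 0 < S + (cmpmx A *m u) i 0 by rewrite ltr_wpDl.
have : t * (S + (cmpmx A *m u) i 0) <= S.
  have -> : S + (cmpmx A *m u) i 0 = (cmpmx M *m u) i 0.
    by rewrite -splitting mulmxBl /S !mxE subrKC.
  apply: le_trans (cmpmx_mulmx_weighted M imax xi) _.
  by rewrite /x -!mulmxA mulKVmx // norm_mulmx_le_mxabs.
move=> /le_lt_trans/(_ (ltr_pwDr (Au_gt0 i) (lexx S))).
rewrite gtr_pMl // => t_lt1.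
by apply: le_lt_trans (imax p) _; rewrite gtr_pMl.
Qed.

Lemma mul_conj_div_norm (z : C) : z * (z^* / `|z|) = `|z|.
Proof.
have [->|z_neq0] := eqVneq z 0; first by rewrite mul0r normr0.
by rewrite mulrA -normCK expr2 mulfK // normr_eq0.
Qed.

Lemma norm_conj_div_norm_le1 (z : C) : `|(z^* / `|z|)| <= 1.
Proof.
have [->|z_neq0] := eqVneq z 0; first by rewrite rmorph0 mul0r normr0 ler01.
by rewrite normf_div normr_id norm_conjC divff // normr_eq0.
Qed.

Lemma mxabs_mulmx_lt n (T : 'M[C]_n) (u : 'cV[C]_n) (i : 'I_n) :
  (forall j, 0 <= u j 0) ->
  (forall y : 'cV[C]_n, (forall j, `|y j 0| <= u j 0) -> `|(T *m y) i 0| < u i 0) ->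
  (mxabs T *m u) i 0 < u i 0.
Proof.
move=> u_ge0 T_lt.
(* [y j] carries the phase of [T i j]; it is 0 when [T i j] is, as 0^-1 = 0. *)
pose y : 'cV[C]_n := \col_j (u j 0 * ((T i j)^* / `|T i j|)).
have -> : (mxabs T *m u) i 0 = `|(T *m y) i 0|.
  suff -> : (T *m y) i 0 = (mxabs T *m u) i 0.
    by rewrite ger0_norm // mxE sumr_ge0 // => j _; rewrite mxE mulr_ge0.
  by rewrite !mxE; apply: eq_bigr => j _; rewrite !mxE mulrCA mul_conj_div_norm mulrC.
apply: T_lt => j; rewrite mxE normrM ger0_norm //.
by rewrite ler_piMr // norm_conj_div_norm_le1.
Qed.

End Spectrum.

Section MmatrixVector.
Variable C : numClosedFieldType.

Lemma nonneg_mxOver_real m n (B : 'M[C]_(m, n)) :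
  (forall i j, 0 <= B i j) -> B \is a mxOver Num.real.
Proof. by move=> B_ge0; apply/mxOverP => i j; apply: ger0_real. Qed.

Lemma scalar_sub_inv_ge0 n (B : 'M[C]_n) t (c : 'cV[C]_n) :
  (forall i j, 0 <= B i j) -> t \is Num.real ->
  semipositive (t%:M - B) -> (t%:M - B) \in unitmx -> (forall i, 0 <= c i 0) ->
  forall i, 0 <= (invmx (t%:M - B) *m c) i 0.
Proof.
move=> B_ge0 tR Xsp Xunit c_ge0; apply: Zmatrix_semipositive_ge0 Xsp _ _ => [i j ij||i].
- by rewrite !mxE (negbTE ij) mulr0n sub0r oppr_le0.
- rewrite mxOverM ?invmx_mxOver // ?rpredB ?mxOver_scalar ?rpred0 ?nonneg_mxOver_real //.
  move=> i j.
  by rewrite ord1.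
- by rewrite (mulKVmx Xunit).
Qed.

Section InductionStep.
Variables (m : nat) (B : 'M[C]_(1 + m)) (a : C).
Hypotheses (B_ge0 : forall i j, 0 <= B i j) (aR : a \is Num.real).
Let B' := drsubmx B.

Lemma drsubmx_ge0 i j : 0 <= B' i j.
Proof. by rewrite /B' !mxE; apply: B_ge0. Qed.

Let BR := nonneg_mxOver_real B_ge0.
Let B'R := nonneg_mxOver_real drsubmx_ge0.

Lemma real_eigvals_lt_drsubmx :
  real_eigvals_lt B a ->
  (forall t, t \is Num.real -> real_eigvals_lt B' t -> semipositive (t%:M - B')) ->
  real_eigvals_lt B' a.
Proof.
move=> Ba IH z zB' zR; rewrite real_ltNge //; apply/negP => az.
pose S := [seq y <- eigvals B' | (y \is Num.real) && (a <= y)].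
have [s sS s_max] : exists2 s, s \in S & forall y, y \in S -> y <= s.
  apply: seq_real_max => [|y]; last by rewrite mem_filter => /andP[/andP[]].
  by apply: contraTneq (_ : z \in S) => [->|]; rewrite ?mem_filter ?zR ?az.
move: sS; rewrite mem_filter => /andP[/andP[sR a_le_s] sB'].
have B'_lt t : s < t -> real_eigvals_lt B' t.
  move=> st y yB' yR; have [ay|] := boolP (a <= y).
    by apply: le_lt_trans st; apply: s_max; rewrite mem_filter yR ay.
  by rewrite -real_ltNge // => /lt_le_trans; apply; apply: ltW (le_lt_trans a_le_s st).
pose h := ('X - (B 0 0)%:P) * char_poly B' - char_poly B.
have h_eval t : h.[t] = (t - B 0 0) * \det (t%:M - B') - \det (t%:M - B).
  by rewrite hornerD hornerN hornerM hornerXsubC !horner_char_poly.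
have [t st] : exists2 t, s < t & ~ 0 <= h.[t].
  apply: (poly_lt0_right sR).
  rewrite h_eval eigvals_det_eq0 // mulr0 sub0r oppr_lt0.
  apply: det_scalar_sub_gt0 => // y yB yR.
  exact: lt_le_trans (Ba y yB yR) a_le_s.
apply; have tR : t \is Num.real by rewrite -(ler_real (ltW st)).
have Xdet := det_scalar_sub_gt0 B'R tR (B'_lt t st).
have Xunit : (t%:M - B') \in unitmx by rewrite unitmxE unitfE gt_eqF.
rewrite h_eval det_scalar_sub_schur // -mulrBl opprB addrC subrK mulr_ge0 ?(ltW Xdet) //.
rewrite -mulmxA mxE sumr_ge0 // => k _; rewrite mulr_ge0 //; first by rewrite !mxE.
apply: scalar_sub_inv_ge0 => // [||i]; first exact: drsubmx_ge0.
  exact: IH tR (B'_lt t st).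
by rewrite !mxE.
Qed.

Lemma semipositive_scalar_sub_step :
  real_eigvals_lt B a -> real_eigvals_lt B' a -> semipositive (a%:M - B') ->
  semipositive (a%:M - B).
Proof.
move=> Ba B'a Xsp; have Xdet := det_scalar_sub_gt0 B'R aR B'a.
have Xunit : (a%:M - B') \in unitmx by rewrite unitmxE unitfE gt_eqF.
have := det_scalar_sub_gt0 BR aR Ba.
rewrite det_scalar_sub_schur // pmulr_lgt0 // subr_gt0 => schur_lt.
rewrite scalar_sub_block; apply: semipositive_block => // [j|].
  by rewrite !mxE.
by apply: scalar_sub_inv_ge0 => // [|i]; [exact: drsubmx_ge0 | rewrite !mxE].
Qed.

End InductionStep.

Lemma semipositive_scalar_sub n (B : 'M[C]_n) a :
  (forall i j, 0 <= B i j) -> a \is Num.real -> real_eigvals_lt B a ->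
  semipositive (a%:M - B).
Proof.
elim: n B a => [|m IH] B a B_ge0 aR Ba; first by exists 0 => -[].
have B'a := real_eigvals_lt_drsubmx (B := B : 'M_(1 + m)) B_ge0 aR Ba
  (fun t => IH _ t (drsubmx_ge0 B_ge0)).
exact: semipositive_scalar_sub_step B_ge0 aR Ba B'a (IH _ a (drsubmx_ge0 B_ge0) aR B'a).
Qed.

End MmatrixVector.

Theorem corollary1 (C : numClosedFieldType) (n : nat) (A M F : 'M[C]_n)
  (hM : M \in unitmx) (hF : F \in unitmx)
  (hA : is_Hmatrix A)
  (hMA : cmpmx M - mxabs (M - A) = cmpmx A)
  (hFA : cmpmx F - mxabs (F - A) = cmpmx A) :
  spectral_radius
    (mxabs (1%:M - invmx F *m (M + F - A) *m invmx M *m A)) < 1.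
Proof.
case: hA => _ [al [alR [B_ge0 rhoB]]].
have [u u_gt0 Au_gt0] : semipositive (cmpmx A).
  rewrite -(subKr al%:M (cmpmx A)).
  by apply: semipositive_scalar_sub => //; apply: spectral_radius_real_eigvals_lt.
set T := _ - _.
have T_contr (y : 'cV[C]_n) :
    (forall j, `|y j 0| <= u j 0) -> forall i, `|(T *m y) i 0| < u i 0.
  move=> y_le i; rewrite /T iteration_matrix_factor // -(mulmxA (invmx F *m (F - A))).
  apply: (splitting_contraction hF hFA u_gt0 Au_gt0) => j.
  exact: ltW (splitting_contraction hM hMA u_gt0 Au_gt0 y_le j).
apply: spectral_radius_lt ltr01 _ => z.
apply: (eigval_norm_lt1 _ u_gt0) => [i j|i]; first by rewrite mxE.
by apply: mxabs_mulmx_lt => [j|y /T_contr]; first exact: ltW.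
Qed.
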